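(* Let $R:\widehat{\mathbb{C}}\rightarrow\widehat{\mathbb{C}}$ be a rational map of degree $n$ and let $\iota(z)=1/z$. Then the following are equivalent: \begin{enumerate} \item $R(1)=1$ and $\iota\circ R\circ\iota^{-1}(z)=R(z)$; \item $R(z)=\prod_{i=1}^n \dfrac{z-r_i}{1-r_i z}$ for some $r_1,\dots,r_n\in\mathbb{C}$; \item $R(z)=\dfrac{a_n+a_{n-1}z+\dots+a_1 z^{n-1}+a_0 z^n}{a_0+a_1 z+\dots+a_{n-1}z^{n-1}+a_n z^n}$ for some $a_0,\dots,a_n\in\mathbb{C}$. \end{enumerate}
   Context: $\widehat{\mathbb{C}}$ denotes the Riemann sphere; the degree of a rational map is the maximum of the degrees of numerator and denominator in lowest terms.
   Formalization: In (2) each rᵢ ranges over the Riemann sphere $\widehat{\mathbb{C}}$ rather than ℂ, with the factor (z − rᵢ)/(1 − rᵢz) taken as 1/z when rᵢ = ∞. The statement above fails without it. *)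

(* C := R[i] (complex numbers over a real field R : realType;
   for R the real numbers this is the field of complex numbers). *)
From HB Require Import structures.
From mathcomp Require Import all_boot all_order all_algebra.
From mathcomp Require Import complex.
From mathcomp Require Import reals.
Set Implicit Arguments. Unset Strict Implicit. Unset Printing Implicit Defensive.
Import Order.TTheory GRing.Theory Num.Theory.
Local Open Scope ring_scope.

Notation "x %:F" := (@FracField.tofrac _ x) : ring_scope.

(* The Riemann sphere: Some z = the finite point z, None = infinity. *)
Definition sphere (C : Type) := option C.

Section Sphere.
Variable C : fieldType.

(* iota(z) = 1/z on the Riemann sphere (an involution, so iota^{-1} = iota). *)
Definition sphere_inv (z : sphere C) : sphere C :=
  match z with
  | None => Some 0
  | Some w => if w == 0 then None else Some w^-1
  end.

(* degree of the rational map p/q (p, q in lowest terms) *)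
Definition ratdeg (p q : {poly C}) : nat := (maxn (size p) (size q)).-1.

(* The map of the Riemann sphere induced by the rational function p/q,
   with p, q coprime (lowest terms).  At infinity the value is the ratio of
   the coefficients of degree d = ratdeg p q. *)
Definition ratmap (p q : {poly C}) (z : sphere C) : sphere C :=
  match z with
  | Some w => if q.[w] == 0 then None else Some (p.[w] / q.[w])
  | None => let d := ratdeg p q in
            if q`_d == 0 then None else Some (p`_d / q`_d)
  end.

(* The factor (z - r)/(1 - r z) as a rational function; for r = infinity
   (None) this is its limit 1/z. *)
Definition blaschke_factor (r : sphere C) : {fraction {poly C}} :=
  match r with
  | Some r => ('X - r%:P)%:F / (1 - r *: 'X)%:F
  | None => 1 / ('X : {poly C})%:F
  end.

End Sphere.

From HB Require Import structures.
From mathcomp Require Import all_boot all_order all_algebra.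
From mathcomp Require Import complex.
From mathcomp Require Import reals.
From mathcomp Require Import zify.
Import Order.TTheory GRing.Theory Num.Theory.
Set Implicit Arguments. Unset Strict Implicit.
Local Open Scope ring_scope.

(* Write q* := z^n q(1/z) for the reciprocal of q with respect to degree n
   (the coefficient reversal [recip n q]).  With p/q in lowest terms of
   degree n, each of the three conditions is equivalent to p = q*.
   Condition (1) at a point w <> 0 reads p(w) p(1/w) = q(w) q(1/w), i.e.
   p p* = q* q.  A fraction in lowest terms of degree n is determined up to a
   scalar by any representation of degree at most n, so p* = c q and q* = c p,
   and R(1) = 1 forces c = 1.  Conversely p = q* gives R(1/z) = 1/R(z), the
   point at infinity being handled by the top coefficients p_n = q(0) and
   q_n = p(0).  Each Blaschke factor is d*/d with d = 1 - r z (d = z for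
   r = infinity), and (d e)* = d* e*, so a Blaschke product is D*/D; conversely,
   factoring q over an algebraically closed field writes q*/q as such a
   product.  Finally (3) is A*/A written out in coefficients, and p/q = A*/A
   forces A = c q and A* = c p, whence p = q*. *)

Section Reciprocal.
Variable F : numFieldType.
Implicit Types (p q : {poly F}) (n m : nat).

Definition recip n q : {poly F} := \poly_(i < n.+1) q`_(n - i).

Lemma eq_poly_at_nonzero p q : (forall w, w != 0 -> p.[w] = q.[w]) -> p = q.
Proof.
move=> pq; apply/eqP; rewrite -subr_eq0; apply/eqP.
pose rs := [seq k.+1%:R : F | k <- iota 0 (size (p - q))].
apply: (@roots_geq_poly_eq0 _ _ rs); last by rewrite size_map size_iota.
- apply/allP => _ /mapP [k _ ->].
  by rewrite /root hornerD hornerN pq ?subrr // pnatr_eq0.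
- by rewrite map_inj_uniq ?iota_uniq // => i j /eqP; rewrite eqr_nat => /eqP [].
Qed.

Lemma size_recip n q : (size (recip n q) <= n.+1)%N.
Proof. exact: size_poly. Qed.

Lemma coef_recip n q j : (recip n q)`_j = if (j < n.+1)%N then q`_(n - j) else 0.
Proof. exact: coef_poly. Qed.

Lemma horner_recip n q w : w != 0 -> (size q <= n.+1)%N ->
  (recip n q).[w] = w ^+ n * q.[w^-1].
Proof.
move=> w0 sq; rewrite /recip poly_def horner_sum (horner_coef_wide _ sq).
rewrite mulr_sumr (reindex_inj rev_ord_inj); apply: eq_bigr => i _ /=.
have le_in : (i <= n)%N by rewrite -ltnS.
rewrite hornerZ hornerXn subSS subKn // exprVn mulrCA; congr (_ * _).
have -> : w ^+ n = w ^+ (n - i) * w ^+ i by rewrite -exprD subnK.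
by rewrite mulfK // expf_neq0.
Qed.

Lemma recipK n q : (size q <= n.+1)%N -> recip n (recip n q) = q.
Proof.
move=> sq; apply/polyP => j; rewrite !coef_recip.
case: (ltnP j n.+1) => [lt_jn | le_nj]; last by rewrite nth_default // (leq_trans sq).
by rewrite ifT ?subKn // ltnS leq_subr.
Qed.

Lemma recip0 n : recip n 0 = 0.
Proof. by apply/polyP => j; rewrite coef_recip !coef0 if_same. Qed.

Lemma recip_eq0 n q : (size q <= n.+1)%N -> (recip n q == 0) = (q == 0).
Proof.
move=> sq; apply/eqP/eqP => [q0 | ->]; last exact: recip0.
by rewrite -(recipK sq) q0 recip0.
Qed.

Lemma recipZ n c q : recip n (c *: q) = c *: recip n q.
Proof.
by apply/polyP => j; rewrite coefZ !coef_recip coefZ; case: ifP; rewrite ?mulr0.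
Qed.

Lemma recipM n m p q : (size p <= n.+1)%N -> (size q <= m.+1)%N ->
  recip (n + m) (p * q) = recip n p * recip m q.
Proof.
move=> sp sq; have spq : (size (p * q)%R <= (n + m).+1)%N.
  by apply: leq_trans (size_polyMleq _ _) _; lia.
apply: eq_poly_at_nonzero => w w0.
by rewrite hornerM !horner_recip // hornerM exprD mulrACA.
Qed.

Lemma horner_recip1 n q : (size q <= n.+1)%N -> (recip n q).[1] = q.[1].
Proof. by move=> sq; rewrite horner_recip ?oner_eq0 // expr1n mul1r invr1. Qed.

Lemma sum_scaleX_poly n (a : 'I_n.+1 -> F) :
  \sum_(i < n.+1) a i *: 'X^i = \poly_(i < n.+1) a (inord i).
Proof. by rewrite poly_def; apply: eq_bigr => i _; rewrite inord_val. Qed.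

Lemma size_sum_scaleX n (a : 'I_n.+1 -> F) :
  (size (\sum_(i < n.+1) a i *: 'X^i)%R <= n.+1)%N.
Proof. by rewrite sum_scaleX_poly size_poly. Qed.

Lemma sum_scaleX_rev n (a : 'I_n.+1 -> F) :
  \sum_(i < n.+1) a (rev_ord i) *: 'X^i = recip n (\sum_(i < n.+1) a i *: 'X^i).
Proof.
rewrite /recip poly_def; apply: eq_bigr => i _; congr (_ *: _).
rewrite sum_scaleX_poly coef_poly ltnS leq_subr; congr (a _).
by apply: val_inj; rewrite /= inordK ?subSS // ltnS leq_subr.
Qed.

Lemma sum_scaleX_coef n q : (size q <= n.+1)%N -> \sum_(i < n.+1) q`_i *: 'X^i = q.
Proof.
move=> sq; rewrite -poly_def; apply/polyP => j; rewrite coef_poly.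
by case: (ltnP j n.+1) => // le_nj; rewrite nth_default // (leq_trans sq).
Qed.

End Reciprocal.

Section LowestTerms.
Variable F : fieldType.
Implicit Types (p q : {poly F}) (n : nat).

Lemma size_le_ratdeg p q n : ratdeg p q = n -> (size p <= n.+1)%N /\ (size q <= n.+1)%N.
Proof. by rewrite /ratdeg => <-; split; lia. Qed.

Lemma size_eq_ratdeg p q n : ratdeg p q = n -> q != 0 ->
  size p = n.+1 \/ size q = n.+1.
Proof. by rewrite /ratdeg -size_poly_gt0 => <-; lia. Qed.

Lemma coprimep_horner_neq0 p q x : coprimep p q -> (p.[x] != 0) || (q.[x] != 0).
Proof.
move=> pq; case: (eqVneq p.[x] 0) => //= px.
by apply: coprimep_root pq _; apply/eqP.
Qed.

Lemma coprimep_cross_scale p q n (A B : {poly F}) :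
  coprimep p q -> ratdeg p q = n -> q != 0 -> A != 0 ->
  (size A <= n.+1)%N -> (size B <= n.+1)%N ->
  p * A = B * q -> exists c, A = c *: q /\ B = c *: p.
Proof.
move=> pq pq_n q0 A0 sA sB pA_Bq.
have qp : coprimep q p by rewrite coprimep_sym.
have /dvdpP [v Avq] : q %| A by rewrite -(Gauss_dvdpr _ qp) pA_Bq dvdp_mull.
have Bpv : B = v * p by apply: (mulIf q0); rewrite -pA_Bq Avq mulrCA mulrA.
have v0 : v != 0 by apply: contraNneq A0 => v0; rewrite Avq v0 mul0r.
have sv : (size v <= 1)%N.
  case: (size_eq_ratdeg pq_n q0) => sz.
    have p0 : p != 0 by rewrite -size_poly_gt0 sz.
    by move: sB; rewrite Bpv size_mul // sz addnS /= -add1n leq_add2r.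
  by move: sA; rewrite Avq size_mul // sz addnS /= -add1n leq_add2r.
by exists v`_0; rewrite -!mul_polyC -size1_polyC.
Qed.

End LowestTerms.

Section SphereRatio.
Variable F : fieldType.
Implicit Types (a b c d : F) (p q : {poly F}).

(* [sphere_ratio 0 0] is the junk value [None]. *)
Definition sphere_ratio a b : sphere F := if b == 0 then None else Some (a / b).

Lemma ratmap_Some p q w : ratmap p q (Some w) = sphere_ratio p.[w] q.[w].
Proof. by []. Qed.

Lemma ratmap_None p q :
  ratmap p q None = sphere_ratio p`_(ratdeg p q) q`_(ratdeg p q).
Proof. by []. Qed.

Lemma sphere_invK : involutive (@sphere_inv F).
Proof.
case=> [w|]; last by rewrite /= eqxx.
have [-> | w0] := eqVneq w 0; first by rewrite /= eqxx.
by rewrite /= (negbTE w0) /= invr_eq0 (negbTE w0) invrK.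
Qed.

Lemma sphere_inv0 : sphere_inv (Some 0) = None :> sphere F.
Proof. by rewrite /= eqxx. Qed.

Lemma sphere_invV w : w != 0 -> sphere_inv (Some w) = Some w^-1 :> sphere F.
Proof. by move=> w0; rewrite /= (negbTE w0). Qed.

Lemma sphere_inv_ratio a b : (a != 0) || (b != 0) ->
  sphere_inv (sphere_ratio a b) = sphere_ratio b a.
Proof.
rewrite /sphere_ratio; case: (eqVneq b 0) => [-> | b0 _] /=.
  by rewrite orbF => a0; rewrite (negbTE a0) mul0r.
rewrite mulf_eq0 invr_eq0 (negbTE b0) orbF.
by case: (eqVneq a 0) => //= _; rewrite invf_div.
Qed.

Lemma sphere_ratioMl c a b : c != 0 -> sphere_ratio (c * a) (c * b) = sphere_ratio a b.
Proof.
move=> c0; rewrite /sphere_ratio mulf_eq0 (negbTE c0) /=.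
by case: eqP => // _; rewrite invfM mulrACA mulfV ?mul1r.
Qed.

Lemma sphere_ratio_cross a b c d : sphere_ratio a b = sphere_ratio c d -> a * d = c * b.
Proof.
rewrite /sphere_ratio.
case: (eqVneq b 0) => [-> | b0]; case: (eqVneq d 0) => [-> | d0] //=.
  by rewrite !mulr0.
by case=> /eqP; rewrite eqr_div // => /eqP.
Qed.

Lemma sphere_ratio_id a : a != 0 -> sphere_ratio a a = Some 1.
Proof. by move=> a0; rewrite /sphere_ratio (negbTE a0) divff. Qed.

End SphereRatio.

Section BlaschkeProduct.
Variable F : numFieldType.
Implicit Types (r : sphere F) (n : nat).

Definition blaschke_den r : {poly F} := if r is Some r then 1 - r *: 'X else 'X.

Lemma blaschke_den_neq0 r : blaschke_den r != 0.
Proof.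
case: r => [r|] /=; last by rewrite polyX_eq0.
apply: contra_neq (@oner_neq0 F) => /(congr1 (fun p : {poly F} => p`_0)).
by rewrite coefB coef1 coefZ coefX mulr0 subr0 coef0.
Qed.

Lemma size_blaschke_den r : (size (blaschke_den r) <= 2)%N.
Proof.
case: r => [r|] /=; last by rewrite size_polyX.
apply: leq_trans (size_polyD _ _) _; rewrite size_polyN size_poly1 geq_max /=.
by rewrite (leq_trans (size_scale_leq _ _)) ?size_polyX.
Qed.

Lemma blaschke_factor_recip r :
  blaschke_factor r = (recip 1 (blaschke_den r))%:F / (blaschke_den r)%:F.
Proof.
case: r => [r|] /=.
  congr (_%:F / _); apply: eq_poly_at_nonzero => w w0.
  rewrite horner_recip ?(size_blaschke_den (Some r)) // !hornerE expr1.
  by rewrite mulrBr mulr1 mulrCA mulfV ?mulr1.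
have -> : recip 1 'X = 1 :> {poly F}.
  apply: eq_poly_at_nonzero => w w0.
  by rewrite horner_recip ?size_polyX // hornerX hornerC expr1 mulfV.
by rewrite tofrac1.
Qed.

Lemma prod_blaschke_den_neq0 n (r : 'I_n -> sphere F) :
  \prod_(i < n) blaschke_den (r i) != 0.
Proof. by apply/prodf_neq0 => i _; apply: blaschke_den_neq0. Qed.

Lemma size_prod_blaschke_den n (r : 'I_n -> sphere F) :
  (size (\prod_(i < n) blaschke_den (r i))%R <= n.+1)%N.
Proof.
elim: n r => [|n IHn] r; first by rewrite big_ord0 size_poly1.
rewrite big_ord_recl; apply: leq_trans (size_polyMleq _ _) _.
by have := size_blaschke_den (r ord0); have := IHn (fun i => r (lift ord0 i)); lia.
Qed.

Lemma prod_blaschke_factor n (r : 'I_n -> sphere F) :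
  \prod_(i < n) blaschke_factor (r i) =
    (recip n (\prod_(i < n) blaschke_den (r i)))%:F
      / (\prod_(i < n) blaschke_den (r i))%:F.
Proof.
elim: n r => [|n IHn] r.
  rewrite !big_ord0; have -> : recip 0 1 = 1 :> {poly F}.
    apply: eq_poly_at_nonzero => w w0.
    by rewrite horner_recip ?size_poly1 // !hornerC mul1r.
  by rewrite tofrac1 divr1.
rewrite !big_ord_recl IHn blaschke_factor_recip mulf_div -!tofracM.
by rewrite -(@recipM _ 1 n) ?size_blaschke_den ?size_prod_blaschke_den.
Qed.

End BlaschkeProduct.

Section ReciprocalCriterion.
Variable F : numFieldType.
Variables (p q : {poly F}) (n : nat).
Hypotheses (pq_coprime : coprimep p q) (pq_deg : ratdeg p q = n).

Lemma ratmap_recip_symmetric : p = recip n q ->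
  ratmap p q (Some 1) = Some 1 /\
  forall z, sphere_inv (ratmap p q (sphere_inv z)) = ratmap p q z.
Proof.
move=> pE; have [sp sq] := size_le_ratdeg pq_deg.
have qE : q = recip n p by rewrite pE recipK.
have nonroot x := coprimep_horner_neq0 x pq_coprime.
have infty_0 : ratmap p q None = sphere_inv (ratmap p q (Some 0)).
  have pn : p`_n = q.[0] by rewrite pE coef_recip ltnSn subnn horner_coef0.
  have qn : q`_n = p.[0] by rewrite qE coef_recip ltnSn subnn horner_coef0.
  by rewrite ratmap_None ratmap_Some pq_deg pn qn sphere_inv_ratio.
split.
  have p1 : p.[1] = q.[1] by rewrite pE horner_recip1.
  by rewrite ratmap_Some p1 sphere_ratio_id //; have := nonroot 1; rewrite p1 orbb.
case=> [w|]; last by rewrite infty_0.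
have [-> | w0] := eqVneq w 0; first by rewrite sphere_inv0 infty_0 sphere_invK.
rewrite sphere_invV // !ratmap_Some sphere_inv_ratio //.
rewrite -(sphere_ratioMl _ _ (expf_neq0 n w0)) -!horner_recip //.
by rewrite -pE -qE.
Qed.

Lemma ratmap_symmetric_recip : ratmap p q (Some 1) = Some 1 ->
  (forall z, sphere_inv (ratmap p q (sphere_inv z)) = ratmap p q z) ->
  p = recip n q.
Proof.
move=> at1 sym; have [sp sq] := size_le_ratdeg pq_deg.
have q1 : q.[1] != 0.
  by apply: contraPneq at1 => q1; rewrite ratmap_Some /sphere_ratio q1 eqxx.
have p1 : p.[1] = q.[1].
  rewrite ratmap_Some -(sphere_ratio_id (oner_neq0 F)) in at1.
  by have := sphere_ratio_cross at1; rewrite mulr1 mul1r.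
have q0 : q != 0 by apply: contraNneq q1 => ->; rewrite horner0.
have p0 : p != 0 by apply: contraNneq q1 => p0; rewrite -p1 p0 horner0.
have cross : p * recip n p = recip n q * q.
  apply: eq_poly_at_nonzero => w w0; rewrite !hornerM !horner_recip //.
  have := sym (Some w); rewrite sphere_invV // !ratmap_Some.
  rewrite sphere_inv_ratio ?coprimep_horner_neq0 // => /sphere_ratio_cross e.
  by rewrite mulrCA -e mulrA.
have rp0 : recip n p != 0 by rewrite recip_eq0.
have [c [pc qc]] := coprimep_cross_scale pq_coprime pq_deg q0 rp0
  (size_recip _ _) (size_recip _ _) cross.
have c1 : c = 1.
  by apply: (mulIf q1); rewrite mul1r -hornerZ -pc horner_recip1.
by rewrite qc c1 scale1r.
Qed.

Lemma frac_recip_recip (A : {poly F}) : A != 0 -> (size A <= n.+1)%N ->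
  p%:F / q%:F = (recip n A)%:F / A%:F -> p = recip n q.
Proof.
move=> A0 sA pqA; have rA0 : recip n A != 0 by rewrite recip_eq0.
have q0 : q != 0.
  apply: contraPneq pqA => ->; rewrite tofrac0 invr0 mulr0 => /esym/eqP.
  by rewrite mulf_eq0 invr_eq0 !tofrac_eq0 (negbTE rA0) (negbTE A0).
have cross : p * A = recip n A * q.
  by apply/eqP; rewrite -tofrac_eq !tofracM -eqr_div ?tofrac_eq0 // pqA.
have [c [Aq rAp]] := coprimep_cross_scale pq_coprime pq_deg q0 A0 sA
  (size_recip _ _) cross.
have c0 : c != 0 by apply: contraNneq A0 => c0; rewrite Aq c0 scale0r.
by apply: (scalerI c0); rewrite -rAp Aq recipZ.
Qed.

End ReciprocalCriterion.

Section BlaschkeFactorization.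
Variable F : numClosedFieldType.

Lemma XsubC_blaschke_den (x : F) : exists c r, 'X - x%:P = c *: blaschke_den r.
Proof.
have [-> | x0] := eqVneq x 0; first by exists 1, None; rewrite subr0 scale1r.
exists (- x), (Some x^-1); rewrite /= scalerBr scalerA mulNr mulfV //.
by rewrite scaleN1r opprK alg_polyC polyCN addrC.
Qed.

Lemma blaschke_den_factorization n (q : {poly F}) : (size q <= n.+1)%N ->
  exists c (r : 'I_n -> sphere F), q = c *: \prod_(i < n) blaschke_den (r i).
Proof.
elim: n q => [|n IHn] q sq.
  by exists q`_0, (fun _ => None); rewrite big_ord0 alg_polyC -size1_polyC.
pose cons a (r : 'I_n -> sphere F) i := if unlift ord0 i is Some j then r j else a.
have prod_cons a r : \prod_(i < n.+1) blaschke_den (cons a r i) =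
    blaschke_den a * \prod_(i < n) blaschke_den (r i).
  rewrite big_ord_recl /cons unlift_none; congr (_ * _).
  by apply: eq_bigr => i _; rewrite liftK.
case: (leqP (size q) n.+1) => [sq' | lt_q].
  have [c [r ->]] := IHn q sq'; exists c, (cons (Some 0) r).
  by rewrite prod_cons /= scale0r subr0 mul1r.
have /closed_rootP [x qx] : size q != 1 by apply: contraTneq lt_q => ->.
have [q' qq'] := factor_theorem _ _ qx.
have q'0 : q' != 0 by apply: contraTneq lt_q => q'0; rewrite qq' q'0 mul0r size_poly0.
have sq' : (size q' <= n.+1)%N.
  by move: sq; rewrite qq' size_mul ?polyXsubC_eq0 // size_XsubC addn2.
rewrite qq'; have [c [r ->]] := IHn q' sq'; have [d [a ->]] := XsubC_blaschke_den x.
exists (c * d), (cons a r).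
by rewrite prod_cons -scalerAl -scalerAr scalerA (mulrC (blaschke_den a)).
Qed.

Lemma recip_blaschke_product (p q : {poly F}) n :
  coprimep p q -> ratdeg p q = n -> p = recip n q ->
  exists r : 'I_n -> sphere F, p%:F / q%:F = \prod_(i < n) blaschke_factor (r i).
Proof.
move=> pq pq_n pE; have [_ sq] := size_le_ratdeg pq_n.
have q0 : q != 0 by apply: contraTneq pq => q0; rewrite pE q0 recip0 coprime0p eqp01.
have [c [r qE]] := blaschke_den_factorization sq.
have c0 : c != 0 by apply: contraNneq q0 => c0; rewrite qE c0 scale0r.
exists r; rewrite prod_blaschke_factor pE qE recipZ -!mul_polyC !tofracM.
by rewrite -mulf_div divff ?mul1r // tofrac_eq0 polyC_eq0.
Qed.

End BlaschkeFactorization.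

Local Open Scope complex_scope.

Theorem theorem2p7 (R : realType) (n : nat) (p q : {poly R[i]})
  (Hcop : coprimep p q) (Hdeg : ratdeg p q = n) :
  [<-> (* (1) R(1) = 1 and iota o R o iota^{-1} = R on the Riemann sphere *)
       ratmap p q (Some 1) = Some 1 /\
       (forall z : sphere R[i], sphere_inv (ratmap p q (sphere_inv z)) = ratmap p q z);
       (* (2) R(z) = prod_{i=1}^n (z - r_i)/(1 - r_i z) *)
       exists r : 'I_n -> sphere R[i],
         (p%:F / q%:F = \prod_(i < n) blaschke_factor (r i))%R;
       (* (3) R(z) = (a_n + ... + a_0 z^n)/(a_0 + ... + a_n z^n) *)
       exists a : 'I_n.+1 -> R[i],
         (\sum_(i < n.+1) a i *: 'X^i != 0) /\
         (p%:F / q%:F =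
            (\sum_(i < n.+1) a (rev_ord i) *: 'X^i)%:F
              / (\sum_(i < n.+1) a i *: 'X^i)%:F)%R].
Proof.
tfae.
- case=> at1 sym; apply: (recip_blaschke_product Hcop Hdeg).
  exact: ratmap_symmetric_recip Hcop Hdeg at1 sym.
- case=> r ->; pose D := \prod_(i < n) blaschke_den (r i).
  exists (fun i => D`_i); rewrite (sum_scaleX_rev (fun i => D`_i)).
  rewrite sum_scaleX_coef ?size_prod_blaschke_den //.
  by split; [exact: prod_blaschke_den_neq0 | exact: prod_blaschke_factor].
- case=> a [A0 pqA]; apply: (ratmap_recip_symmetric Hcop Hdeg).
  by apply: (frac_recip_recip Hcop Hdeg A0 (size_sum_scaleX a)); rewrite -sum_scaleX_rev.
Qed.
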